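(* Let $G=\mathbb Z$ with the discrete topology, $Y=(0,\infty)$, and $\theta$ the partial action with $Y_n=(\max\{0,n\},\infty)$ and $\theta_n(y)=n+y$ for $y\in Y_{-n}$. Let $X$ be a compact space and $\hat\theta$ the induced partial action on $C(X,Y)$, i.e. $C(X,Y)_n=\{f: f(x)>\max\{0,n\}\text{ for all }x\in X\}$ and $\hat\theta_n(f)=\theta_n\circ f=f+n$. Then the enveloping space $C(X,Y)_G$ of $\hat\theta$ is $G$-homeomorphic to $C(X,\mathbb R)$ (compact-open topology) with the global action $(n,F)\mapsto F+n$.
   Context: $C(X,Y)$ has the compact-open topology. The enveloping space is $C(X,Y)_G=(G\times C(X,Y))/R$ with the quotient topology, where $(n,f)R(m,g)$ iff $f\in C(X,Y)_{m-n}$ and $\hat\theta_{n-m}(f)=g$, with global action $k\cdot[n,f]=[k+n,f]$. A $G$-homeomorphism is a homeomorphism commuting with the actions. *)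

From HB Require Import structures.
From mathcomp Require Import all_boot all_order all_algebra generic_quotient.
From mathcomp Require Import all_classical all_reals topology subtype_topology function_spaces normedtype.
From mathcomp Require Import lra.
Set Implicit Arguments. Unset Strict Implicit. Unset Printing Implicit Defensive.
Import Order.TTheory GRing.Theory Num.Theory.
Import numFieldNormedType.Exports.
Local Open Scope classical_set_scope.
Local Open Scope ring_scope.
Local Open Scope quotient_scope.

Notation Ypos R := (set_type [set y : R | (0 < y)%R]) (only parsing).

Definition CXY (X : topologicalType) (R : realType) :=
  initial_topology
    (fun f : continuousType X (Ypos R) => (f : X -> Ypos R) : {compact-open, X -> Ypos R}).
Definition CXR (X : topologicalType) (R : realType) :=
  initial_topology
    (fun f : continuousType X R => (f : X -> R) : {compact-open, X -> R}).

Definition Zd := discrete_topology int.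

Definition cval (X : topologicalType) (R : realType) (f : CXY X R) (x : X) : R :=
  \val ((f : X -> Ypos R) x).

Definition CXY_dom (X : topologicalType) (R : realType) (n : int) (f : CXY X R) : Prop :=
  forall x, Num.max 0 (n%:~R : R) < cval f x.

Definition hat_theta_rel (X : topologicalType) (R : realType) (n : int)
  (f g : CXY X R) : Prop :=
  CXY_dom (- n) f /\ forall x, cval g x = n%:~R + cval f x.

Definition envR (X : topologicalType) (R : realType) (p q : Zd * CXY X R) : Prop :=
  hat_theta_rel (p.1 - q.1) p.2 q.2.

Definition envRb (X : topologicalType) (R : realType) : rel (Zd * CXY X R) :=
  fun p q => `[< envR p q >].

Lemma envR_sym_subproof X R (p q : Zd * CXY X R) : envR p q -> envR q p.
Proof.
case: p q => [n f] [m g]; rewrite /envR /hat_theta_rel /CXY_dom /= => -[Hd He].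
have E : forall x, cval f x = (m - n)%:~R + cval g x.
  by move=> x; rewrite He addrA -rmorphD /= addrC subrKA; lra.
split=> x; last exact: E.
have := Hd x; rewrite He !opprB !rmorphB /=.
move: (cval f x) => a.
rewrite /Num.max; (do 2 case: ifP) => /=; lra.
Qed.

Lemma envR_trans_subproof X R (p q r : Zd * CXY X R) :
  envR p q -> envR q r -> envR p r.
Proof.
case: p q r => [n f] [m g] [k h]; rewrite /envR /hat_theta_rel /CXY_dom /=.
move=> [Hd He] [Hd' He']; split=> x; last first.
  by rewrite He' He !rmorphB /=; lra.
have := Hd x; have := Hd' x; rewrite He /= !opprB !rmorphB /=.
move: (cval f x) => a.
rewrite /Num.max; (do 3 case: ifP) => /=; try lra.
Qed.

Lemma envRb_refl X R : reflexive (@envRb X R).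
Proof.
move=> [n f]; apply/asboolP; rewrite /envR /hat_theta_rel /CXY_dom /=.
rewrite subrr oppr0 /=; split=> x; last by rewrite add0r.
by rewrite maxxx /cval; have := set_valP ((f : X -> Ypos R) x).
Qed.

Lemma envRb_sym X R : symmetric (@envRb X R).
Proof.
by move=> p q; apply/asboolP/asboolP; apply: envR_sym_subproof.
Qed.

Lemma envRb_trans X R : transitive (@envRb X R).
Proof.
move=> q p r /asboolP Hpq /asboolP Hqr; apply/asboolP.
exact: envR_trans_subproof Hpq Hqr.
Qed.

Canonical envR_equiv (X : topologicalType) (R : realType) :=
  EquivRel (@envRb X R) (@envRb_refl X R) (@envRb_sym X R) (@envRb_trans X R).

Definition Env (X : topologicalType) (R : realType) :=
  quotient_topology {eq_quot (@envR_equiv X R)}.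

Definition env_act (X : topologicalType) (R : realType) (k : int) (q : Env X R) : Env X R :=
  \pi_(Env X R) ((k + (repr q).1 : Zd), (repr q).2).

(* Since (n, f) R (m, g) says exactly n + f = m + g, the map [n, f] |-> n + f
   is well defined and injective on the enveloping space, and it is obviously
   equivariant.  It is onto: a continuous F on the compact X is bounded below,
   so F = n + max (F - n, 1) for any integer n with n + 1 < F.  Continuity of
   the map uses that post-composition is continuous for the compact-open
   topology and that Z is discrete; continuity of the inverse uses that
   {G | n + 1 < G} is open for the compact-open topology, so one n serves a
   whole neighbourhood. *)

From HB Require Import structures.
From mathcomp Require Import all_boot all_order all_algebra generic_quotient.
From mathcomp Require Import all_classical all_reals topology subtype_topology function_spaces normedtype.
From mathcomp Require Import lra.
Import Order.TTheory GRing.Theory Num.Theory.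
Import numFieldNormedType.Exports.
Local Open Scope classical_set_scope.
Local Open Scope ring_scope.

Lemma compact_open_comp_continuous {X A B : topologicalType} {phi : A -> B} :
  continuous phi ->
  continuous (fun f : {compact-open, X -> A} => phi \o f : {compact-open, X -> B}).
Proof.
move=> phi_cts f; apply/compact_open_cvgP.
  by apply: fmap_filter; exact: (@nbhs_filter {compact-open, X -> A}).
move=> K O cK oO fKO.
have oPO : open (phi @^-1` O) by move/continuousP: phi_cts; apply.
apply: (@filterS _ _ _ [set g : {compact-open, X -> A} | g @` K `<=` phi @^-1` O]).
  by move=> g gK _ [x Kx <-]; apply: (gK (g x)); exists x.
apply: open_nbhs_nbhs; split; first exact: compact_open_open.
by move=> _ [x Kx <-]; apply: fKO; exists x.
Qed.

Lemma cts_compact_open_comp_continuous {X A B : topologicalType} {phi : A -> B} :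
  let CXA := initial_topology
    (fun f : continuousType X A => (f : X -> A) : {compact-open, X -> A}) in
  continuous phi ->
  continuous (fun f : CXA => phi \o (f : X -> A) : {compact-open, X -> B}).
Proof.
move=> CXA phi_cts f.
exact: continuous_comp (@initial_continuous _ _ _ f) (compact_open_comp_continuous phi_cts _).
Qed.

Lemma set_val_continuous (T : topologicalType) (A : set T) :
  continuous (set_val : set_type A -> T).
Proof. exact: initial_continuous. Qed.

Lemma near_discrete_fst {D : discreteTopologicalType} {T : topologicalType}
    (a : D) (b : T) :
  \forall p \near (a, b), p.1 = a.
Proof.
exists ([set a], setT); first by split; [exact: discrete_set1 | exact: filterT].
by move=> [c d] [/= -> _].
Qed.

Section EnvelopingSpace.
Variables (R : realType) (X : topologicalType).

Lemma cval_continuous (f : CXY X R) : continuous (cval f).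
Proof.
move=> x; apply: continuous_comp; first exact: cts_fun.
exact: set_val_continuous.
Qed.

Lemma cval_gt0 (f : CXY X R) x : 0 < cval f x.
Proof. exact: set_valP ((f : X -> Ypos R) x). Qed.

Definition env_sum (p : Zd * CXY X R) : X -> R := fun x => p.1%:~R + cval p.2 x.

Lemma env_sum_continuous p : continuous (env_sum p).
Proof. by move=> x; apply: cvgD; [exact: cvg_cst | exact: cval_continuous]. Qed.

Definition env_sumC (p : Zd * CXY X R) : CXR X R := mkcts (@env_sum_continuous p).

Lemma env_sumCE p x : (env_sumC p : X -> R) x = env_sum p x.
Proof. by []. Qed.

Lemma envR_env_sum p q : envR p q <-> env_sum p =1 env_sum q.
Proof.
case: p q => [n f] [m g]; rewrite /envR /hat_theta_rel /CXY_dom /env_sum /=.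
split=> [[_ Egf] x | E].
  by rewrite Egf rmorphB /=; lra.
split=> x; have := E x; rewrite ?opprB rmorphB /=; last lra.
have := cval_gt0 f x; have := cval_gt0 g x.
move: (cval f x) (cval g x) => a b.
by rewrite /Num.max; case: ifP; lra.
Qed.

Local Open Scope quotient_scope.

Lemma env_pi_eqP p q :
  \pi_(Env X R) p = \pi_(Env X R) q <-> env_sum p =1 env_sum q.
Proof.
by rewrite -envR_env_sum; split=> [/eqmodP/asboolP // | E]; apply/eqmodP/asboolP.
Qed.

Lemma env_sumC_continuous : continuous env_sumC.
Proof.
apply: continuous_comp_initial => -[n0 f0].
pose shift (y : Ypos R) : R := n0%:~R + set_val y.
have shift_cts : continuous shift.
  move=> y; apply: (@continuous_comp _ _ _ set_val (fun t : R => n0%:~R + t)).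
    exact: set_val_continuous.
  by apply: cvgD; [exact: cvg_cst | exact: cvg_id].
pose shifted (f : CXY X R) : {compact-open, X -> R} := shift \o (f : X -> Ypos R).
have shifted_cts : continuous shifted := cts_compact_open_comp_continuous shift_cts.
have shifted_snd_cts : (shifted \o snd) @ nbhs ((n0, f0) : Zd * CXY X R) --> shifted f0.
  exact: cvg_comp (@cvg_snd _ _ (nbhs n0) (nbhs f0) _) (shifted_cts f0).
apply: cvg_trans (near_eq_cvg _) shifted_snd_cts.
near=> p; apply: funext => x.
change (n0%:~R + cval p.2 x = env_sum p x).
by rewrite /env_sum (near (near_discrete_fst n0 f0) p).
Unshelve. all: by end_near.
Qed.

Definition Env_to_CXR (q : Env X R) : CXR X R := env_sumC (repr q).

Lemma Env_to_CXR_pi p : Env_to_CXR (\pi_(Env X R) p) = env_sumC p.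
Proof. by apply/continuousEP/env_pi_eqP; rewrite reprK. Qed.

Lemma Env_to_CXR_inj : injective Env_to_CXR.
Proof.
move=> q q' E; rewrite -[q]reprK -[q']reprK; apply/env_pi_eqP => x.
exact: (congr1 (fun F : CXR X R => (F : X -> R) x) E).
Qed.

Lemma Env_to_CXR_continuous : continuous Env_to_CXR.
Proof.
apply: repr_comp_continuous; first exact: env_sumC_continuous.
by move=> p q /eqP/env_pi_eqP E; apply/eqP/continuousEP.
Qed.

Lemma Env_to_CXR_act k q x :
  (Env_to_CXR (env_act k q) : X -> R) x = k%:~R + (Env_to_CXR q : X -> R) x.
Proof.
by rewrite /env_act Env_to_CXR_pi /Env_to_CXR !env_sumCE /env_sum rmorphD addrA.
Qed.

Lemma shift_pos_subproof (n : int) (t : R) :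
  [set y : R | 0 < y] (Num.max (t - n%:~R) 1).
Proof. by rewrite /= lt_max ltr01 orbT. Qed.

Definition shift_pos (n : int) (t : R) : Ypos R :=
  SigSub (mem_set (shift_pos_subproof n t)).

Lemma shift_pos_continuous n : continuous (shift_pos n).
Proof.
apply: continuous_comp_initial.
have -> : set_val \o shift_pos n = (fun t => t - n%:~R) \max cst 1 by [].
apply: max_fun_continuous; last exact: cst_continuous.
by move=> t; apply: cvgB; [exact: cvg_id | exact: cvg_cst].
Qed.

Lemma shift_pos_comp_continuous n (F : CXR X R) :
  continuous (shift_pos n \o (F : X -> R)).
Proof.
move=> x; apply: continuous_comp; first exact: cts_fun.
exact: shift_pos_continuous.
Qed.

Definition lift (n : int) (F : CXR X R) : CXY X R :=
  mkcts (@shift_pos_comp_continuous n F).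

Lemma lift_continuous n : continuous (lift n).
Proof.
apply: continuous_comp_initial.
exact: cts_compact_open_comp_continuous (shift_pos_continuous n).
Qed.

Lemma env_sum_lift n (F : CXR X R) x :
  n%:~R + 1 <= (F : X -> R) x -> env_sum (n, lift n F) x = (F : X -> R) x.
Proof.
move=> F_ge; change (n%:~R + Num.max ((F : X -> R) x - n%:~R) 1 = (F : X -> R) x).
move: F_ge; set t := (F : X -> R) x => t_ge.
by rewrite /Num.max; case: ifP; lra.
Qed.

Hypothesis X_compact : compact [set: X].

Lemma CXR_near_gt (a : R) (F0 : CXR X R) :
  (forall x, a < (F0 : X -> R) x) ->
  \forall G \near F0, forall x, a < ((G : CXR X R) : X -> R) x.
Proof.
move=> F0_gt.
pose W := [set G : {compact-open, X -> R} | G @` [set: X] `<=` [set t | a < t]].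
exists [set G : CXR X R | W (G : X -> R)]; split.
- by exists W => //; apply: compact_open_open => //; exact: open_gt.
- by move=> _ [x _ <-]; exact: F0_gt.
- by move=> G WG x; apply: WG; exists x.
Qed.

Lemma CXR_bounded_below (F : CXR X R) :
  exists n : int, forall x, n%:~R + 1 < (F : X -> R) x.
Proof.
have /compact_bounded/pinfty_ex_gt0[M _ FM] : compact ((F : X -> R) @` [set: X]).
  by apply: continuous_compact => //; apply: continuous_subspaceT; exact: cts_fun.
exists (Num.floor (- M) - 2) => x.
have /ler_normlP[Fx_ge _] := FM ((F : X -> R) x) (imageT _ x).
have := floor_le (- M); rewrite rmorphB /= (_ : 2%:~R = 2%:R :> R) //.
by move: Fx_ge; set t := (F : X -> R) x; lra.
Qed.

(* xget falls back to 0 when F is unbounded below, which X_compact excludes. *)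
Definition env_level (F : CXR X R) : int :=
  xget 0 [set n : int | forall x, n%:~R + 1 < (F : X -> R) x].

Definition CXR_to_Env (F : CXR X R) : Env X R :=
  \pi_(Env X R) ((env_level F : Zd), lift (env_level F) F).

Lemma env_levelP (F : CXR X R) : forall x, (env_level F)%:~R + 1 < (F : X -> R) x.
Proof. exact: (xgetPex 0 (CXR_bounded_below F)). Qed.

Lemma CXR_to_EnvE n (F : CXR X R) : (forall x, n%:~R + 1 < (F : X -> R) x) ->
  CXR_to_Env F = \pi_(Env X R) ((n : Zd), lift n F).
Proof.
move=> F_gt; apply/env_pi_eqP => x.
by rewrite !env_sum_lift ?(ltW (F_gt x)) ?(ltW (env_levelP F x)).
Qed.

Lemma CXR_to_EnvK : cancel CXR_to_Env Env_to_CXR.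
Proof.
move=> F; rewrite Env_to_CXR_pi; apply/continuousEP => x.
exact/env_sum_lift/ltW/env_levelP.
Qed.

Lemma Env_to_CXRK : cancel Env_to_CXR CXR_to_Env.
Proof. exact: inj_can_sym CXR_to_EnvK Env_to_CXR_inj. Qed.

Lemma CXR_to_Env_continuous : continuous CXR_to_Env.
Proof.
move=> F0; set n := env_level F0.
have near_above := CXR_near_gt _ _ (env_levelP F0).
pose fixed_level G := \pi_(Env X R) ((n : Zd), lift n G).
have fixed_level_cts : fixed_level @ nbhs F0 --> fixed_level F0.
  apply: continuous_comp; last exact: pi_continuous.
  exact: cvg_pair (cvg_cst _) (lift_continuous n F0).
rewrite /continuous_at (CXR_to_EnvE _ _ (env_levelP F0)).
apply: cvg_trans (near_eq_cvg _) fixed_level_cts.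
by near=> G; apply/esym/CXR_to_EnvE; exact: (near near_above G).
Unshelve. all: by end_near.
Qed.

End EnvelopingSpace.

Theorem theorem3p13 (R : realType) (X : topologicalType) (X_compact : compact [set: X]) :
  exists (h : Env X R -> CXR X R) (g : CXR X R -> Env X R),
    [/\ continuous h, continuous g, cancel h g, cancel g h &
      forall (k : int) (q : Env X R) (x : X),
        (h (env_act k q) : X -> R) x = k%:~R + (h q : X -> R) x].
Proof.
exists (@Env_to_CXR R X), (@CXR_to_Env R X); split.
- exact: Env_to_CXR_continuous.
- exact: CXR_to_Env_continuous.
- exact: Env_to_CXRK.
- exact: CXR_to_EnvK.
- exact: Env_to_CXR_act.
Qed.
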